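(* Let $X$ be a Banach space whose norm is Fréchet differentiable and let $1<p<\infty$, $p\neq 2$. If $x=(x_k)\in\ell^p(X)$ is a left symmetric point (respectively, right symmetric point) of $\ell^p(X)$, then either there is an index $n$ with $x_k=0$ for all $k\neq n$ and $x_n$ a left symmetric point (respectively, right symmetric point) of $X$, or there are indices $n\neq m$ with $x_k=0$ for all $k\notin\{n,m\}$ and $\|x_n\|=\|x_m\|$.
   Context: $\ell^p(X)$ is the space of sequences $(x_k)_{k\in\mathbb{N}}$ in $X$ with $\|(x_k)\|_p=(\sum_k\|x_k\|^p)^{1/p}<\infty$. In a normed space $Y$ over $\mathbb{K}$, $x\perp_{BJ}y$ means $\|x+\lambda y\|\ge\|x\|$ for all $\lambda\in\mathbb{K}$; $x$ is a left symmetric point if $x\perp_{BJ}y$ implies $y\perp_{BJ}x$ for all $y$, and a right symmetric point if $y\perp_{BJ}x$ implies $x\perp_{BJ}y$ for all $y$. The norm of $X$ is Fréchet differentiable if for every non-zero $x$ there is $\varphi\in X^*$ with $\lim_{h\to0}\big|\|x+h\|-\|x\|-\varphi(h)\big|/\|h\|=0$. *)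

From HB Require Import structures.
From mathcomp Require Import all_boot all_order all_algebra.
From mathcomp Require Import all_classical all_reals all_analysis.
Set Implicit Arguments. Unset Strict Implicit. Unset Printing Implicit Defensive.
Import Order.TTheory GRing.Theory Num.Theory.
Import numFieldNormedType.Exports.
Local Open Scope classical_set_scope.
Local Open Scope ring_scope.

(* An isometric complex structure on a real normed space: multiplication by i,
   such that ||(a + i b) x|| = |a + i b| ||x||.  A complex normed space is
   exactly a real normed space equipped with such a J. *)
Record cstruct (R : realType) (X : normedModType R) := CStruct {
  cJ : {linear X -> X};
  cJJ : forall x, cJ (cJ x) = - x;
  cJnorm : forall (a b : R) (x : X),
      `|a *: x + b *: cJ x| = Num.sqrt (a ^+ 2 + b ^+ 2) * `|x| }.

(* The scalar field K: either the reals, or the complex numbers via a complex structure. *)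
Inductive fkind (R : realType) (X : normedModType R) :=
| RealF : fkind X
| ComplexF : cstruct X -> fkind X.

(* Action of the scalar lambda = a + i b (b must be 0 when K = R). *)
Definition sc (R : realType) (X : normedModType R) (k : fkind X) (a b : R) (x : X) : X :=
  match k with
  | RealF => a *: x
  | ComplexF c => a *: x + b *: cJ c x
  end.

Definition admissible (R : realType) (X : normedModType R) (k : fkind X) (b : R) : Prop :=
  match k with RealF => b = 0 | ComplexF _ => True end.

Definition bj (R : realType) (X : normedModType R) (k : fkind X) (x y : X) : Prop :=
  forall a b : R, admissible k b -> `|x| <= `|x + sc k a b y|.

Definition left_sym (R : realType) (X : normedModType R) (k : fkind X) (x : X) : Prop :=
  forall y : X, bj k x y -> bj k y x.

Definition right_sym (R : realType) (X : normedModType R) (k : fkind X) (x : X) : Prop :=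
  forall y : X, bj k y x -> bj k x y.

Definition lp_mem (R : realType) (X : normedModType R) (p : R) (u : nat -> X) : Prop :=
  cvgn (series (fun n => `|u n| `^ p)).

Definition lp_norm (R : realType) (X : normedModType R) (p : R) (u : nat -> X) : R :=
  (limn (series (fun n => `|u n| `^ p))) `^ p^-1.

Definition bj_lp (R : realType) (X : normedModType R) (k : fkind X) (p : R)
    (x y : nat -> X) : Prop :=
  forall a b : R, admissible k b ->
    lp_norm p x <= lp_norm p (fun n => x n + sc k a b (y n)).

Definition left_sym_lp (R : realType) (X : normedModType R) (k : fkind X) (p : R)
    (x : nat -> X) : Prop :=
  forall y : nat -> X, lp_mem p y -> bj_lp k p x y -> bj_lp k p y x.

Definition right_sym_lp (R : realType) (X : normedModType R) (k : fkind X) (p : R)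
    (x : nat -> X) : Prop :=
  forall y : nat -> X, lp_mem p y -> bj_lp k p y x -> bj_lp k p x y.

Definition norm_frechet (R : realType) (X : normedModType R) : Prop :=
  forall x : X, x != 0 -> differentiable (fun y : X => `|y|) x.

From HB Require Import structures.
From mathcomp Require Import all_boot all_order all_algebra.
From mathcomp Require Import all_classical all_reals all_analysis.
From mathcomp Require Import ring lra zify.
Import Order.TTheory GRing.Theory Num.Theory.
Import numFieldNormedType.Exports.
Local Open Scope classical_set_scope.
Local Open Scope ring_scope.
Set Implicit Arguments. Unset Strict Implicit. Unset Printing Implicit Defensive.

(* Test Birkhoff-James orthogonality in l^p(X) only against sequences whose
   coordinates are real multiples a_j x_j of those of x, a finitely supported.
   With A_j = ||x_j||^p, the norm of such combinations is a weighted l^p norm of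
   scalars (a complex scalar a + ib only enlarges it over the real scalar a),
   and convexity of |t|^p shows that x is orthogonal to (a_j x_j) iff
   sum_j A_j a_j = 0, while (a_j x_j) is orthogonal to x iff
   sum_j A_j sg(a_j) |a_j|^(p-1) = 0.  A left (resp. right) symmetric x therefore
   has the property that t |-> sg t |t|^r, with r = p - 1 (resp. 1/(p - 1)),
   preserves the vanishing of every sum A_n u + A_m v + A_l w over distinct
   indices.  As r <> 1, the test (A_m, -A_n, 0) forces A_n = A_m on the support,
   and then (1, 1, -2) rules out three nonzero coordinates.  A single nonzero
   coordinate inherits the symmetry of x, as X embeds isometrically in l^p(X)
   along that coordinate. *)

Section signed_power.
Variable R : realType.
Implicit Types r t : R.

Definition spow r t : R := Num.sg t * `|t| `^ r.

Lemma spow0 r : spow r 0 = 0.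
Proof. by rewrite /spow sgr0 mul0r. Qed.

Lemma spowN r t : spow r (- t) = - spow r t.
Proof. by rewrite /spow sgrN normrN mulNr. Qed.

Lemma spow_gt0 r t : 0 < t -> spow r t = t `^ r.
Proof. by move=> t0; rewrite /spow gtr0_sg // gtr0_norm // mul1r. Qed.

Lemma spow1 r : spow r 1 = 1.
Proof. by rewrite spow_gt0 // powR1. Qed.

Lemma spowK r : 0 < r -> cancel (spow r) (spow r^-1).
Proof.
move=> r0; suff pos t : 0 < t -> spow r^-1 (spow r t) = t.
  move=> t; have [t0|t0|->] := ltgtP t 0; last by rewrite !spow0.
    by move: (pos (- t)); rewrite !spowN oppr_gt0 => /(_ t0) /oppr_inj.
  exact: pos.
move=> t0; rewrite spow_gt0 // spow_gt0 ?powR_gt0 //.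
by rewrite -powRrM mulfV ?gt_eqF // powRr1 // ltW.
Qed.

Lemma continuous_spow r : 0 < r -> continuous (spow r).
Proof.
move=> r0 t; have [->|t0] := eqVneq t 0.
  apply/cvgrPdist_lt => e e0; rewrite spow0; near=> s.
  rewrite sub0r normrN /spow normrM normr_sg ger0_norm ?powR_ge0 //.
  apply: le_lt_trans (ler_piMl (powR_ge0 _ _) _) _; first by case: (s != 0).
  rewrite -[e](@powRr1 _ e) ?ltW // -[1](@mulVf _ r) ?gt_eqF // powRrM.
  apply: gt0_ltr_powR => //; rewrite ?nnegrE ?powR_ge0 //.
  by near: s; apply: cvgr0_norm_lt; [exact: cvg_id | exact: powR_gt0].
have sg_near : \forall s \near t, Num.sg s = Num.sg t.
  have [tn|tp] := ltP t 0.
    by near=> s; rewrite !ltr0_sg //; near: s; exact: lt_nbhsl.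
  have {tp} tp : 0 < t by rewrite lt_neqAle eq_sym t0.
  by near=> s; rewrite !gtr0_sg //; near: s; exact: lt_nbhsr.
have powR_cvg : `|s| `^ r @[s --> t] --> `|t| `^ r.
  have powR_cont : {for `|t|, continuous (fun u : R => u `^ r)}.
    apply/differentiable_continuous/derivable1_diffP.
    by apply: derivable_powR; rewrite in_itv /= normr_gt0 t0.
  exact: (continuous_cvg _ powR_cont (cvg_norm cvg_id)).
apply: cvg_trans (cvgMl_tmp (a := Num.sg t) powR_cvg).
by apply: near_eq_cvg; apply: filterS sg_near => s; rewrite /spow => ->.
Unshelve. all: by end_near.
Qed.

End signed_power.

Lemma continuous_mul_ge0_eq0 (R : realType) (G : R -> R) :
  {for 0, continuous G} -> (forall a, 0 <= a * G a) -> G 0 = 0.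
Proof.
move=> Gc Gge; have [G0|G0|//] := ltgtP (G 0) 0.
- have [a [a0 Ga]] : exists a, 0 < a /\ G a < 0.
    apply: (@filter_ex R 0^'+); near=> a; split; first by near: a; exact: nbhs_right_gt.
    by near: a; exact: cvgr_lt (cvg_at_right_filter Gc) _ G0.
  by have := Gge a; rewrite leNgt pmulr_rlt0 // Ga.
- have [a [a0 Ga]] : exists a, a < 0 /\ 0 < G a.
    apply: (@filter_ex R 0^'-); near=> a; split; first by near: a; exact: nbhs_left_lt.
    by near: a; exact: cvgr_gt (cvg_at_left_filter Gc) _ G0.
  by have := Gge a; rewrite leNgt nmulr_rlt0 // Ga.
Unshelve. all: by end_near.
Qed.

Section power_tangent.
Variable R : realType.
Variable p : R.
Hypothesis p1 : 1 < p.

Let p0 : 0 < p. Proof. exact: lt_trans p1. Qed.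

Lemma bernoulli_powR t : 1 + p * t <= `|1 + t| `^ p.
Proof.
have [t_le|t_gt] := leP (1 + t) 0.
  apply: le_trans (powR_ge0 _ _).
  have : t * (p - 1) <= 0 by apply: mulr_le0_ge0; [lra | rewrite subr_ge0 ltW].
  have -> : 1 + p * t = (1 + t) + t * (p - 1) by ring.
  lra.
rewrite ger0_norm; last exact: ltW.
have p1_gt0 : 0 < p - 1 by rewrite subr_gt0.
have q0 : 0 < p / (p - 1) by rewrite divr_gt0.
(* Young's inequality with the conjugate exponent p / (p - 1) *)
have := conjugate_powR (ltW t_gt) ler01 p0 q0.
rewrite invf_div powR1 mulr1 mul1r => /(_ ltac:(by field; rewrite gt_eqF)).
rewrite -(ler_pM2l p0).
have -> : p * ((1 + t) `^ p / p + (p - 1) / p) = (1 + t) `^ p + (p - 1).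
  by field; rewrite gt_eqF.
nra.
Qed.

Lemma norm_powR_tangent u v :
  `|v| `^ p + p * spow (p - 1) v * (u - v) <= `|u| `^ p.
Proof.
have [->|v0] := eqVneq v 0.
  by rewrite normr0 powR0 ?gt_eqF // spow0 mulr0 mul0r addr0 powR_ge0.
have vp_gt0 : 0 < `|v| `^ p by rewrite powR_gt0 // normr_gt0.
have powE : `|v| `^ p * `|1 + (u / v - 1)| `^ p = `|u| `^ p.
  by rewrite -powRM ?normr_ge0 // -normrM addrC subrK mulrC divfK.
have tangentE :
    `|v| `^ p * (1 + p * (u / v - 1)) = `|v| `^ p + p * spow (p - 1) v * (u - v).
  have sgE : Num.sg v = `|v| / v by rewrite normrEsg mulfK.
  by rewrite /spow -(mulr_powRB1 (normr_ge0 v) p0) sgE; field.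
by rewrite -tangentE -powE ler_pM2l // bernoulli_powR.
Qed.

End power_tangent.

Section weighted_power_sums.
Variable R : realType.
Variable p : R.
Hypothesis p1 : 1 < p.
Variables (M : nat) (w beta gamma : nat -> R).
Hypothesis w_ge0 : forall j, 0 <= w j.

Let F a := \sum_(j < M) w j * `|beta j + gamma j * a| `^ p.
Let G a := \sum_(j < M) w j * gamma j * spow (p - 1) (beta j + gamma j * a).

Let F_ge a b : F a + p * (b - a) * G a <= F b.
Proof.
rewrite /F /G mulr_sumr -big_split /=; apply: ler_sum => j _.
have := ler_wpM2l (w_ge0 j) (norm_powR_tangent p1 (beta j + gamma j * b) (beta j + gamma j * a)).
by apply: le_trans; rewrite le_eqVlt; apply/predU1P; left; ring.
Qed.

Let G_continuous : continuous G.
Proof.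
have spow_cont : continuous (spow (p - 1)) by apply: continuous_spow; rewrite subr_gt0.
apply: (@continuous_big _ _ +%R 0 predT add_continuous) => j _ a.
apply: (@continuous_comp _ _ _ (fun x => beta j + gamma j * x)
                              (fun y => w j * gamma j * spow (p - 1) y)).
  by apply: cvgD; [exact: cvg_cst | apply: cvgMl_tmp; exact: cvg_id].
exact: cvgMl_tmp (spow_cont _).
Qed.

Lemma sum_powR_min_at0_iff :
  (forall a, \sum_(j < M) w j * `|beta j| `^ p <=
             \sum_(j < M) w j * `|beta j + gamma j * a| `^ p) <->
  \sum_(j < M) w j * gamma j * spow (p - 1) (beta j) = 0.
Proof.
have F0 : F 0 = \sum_(j < M) w j * `|beta j| `^ p.
  by apply: eq_bigr => j _; rewrite mulr0 addr0.
have G0 : G 0 = \sum_(j < M) w j * gamma j * spow (p - 1) (beta j).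
  by apply: eq_bigr => j _; rewrite mulr0 addr0.
rewrite -F0 -G0; split => [Fmin | G00 a].
  apply: continuous_mul_ge0_eq0 => [|a]; first exact: G_continuous.
  have := le_trans (F_ge a 0) (Fmin a).
  by rewrite gerDl sub0r mulrN mulNr oppr_le0 -mulrA pmulr_rge0 // (lt_trans _ p1).
by have := F_ge 0 a; rewrite G00 mulr0 addr0.
Qed.

End weighted_power_sums.

Section eventually_constant_series.
Variable R : realType.
Implicit Types u c f : R^nat.

Lemma cvg_series_finsupp f N : (forall j, (N <= j)%N -> f j = 0) ->
  series f @ \oo --> \sum_(j < N) f j.
Proof.
move=> f0; apply: cvg_near_cst; exists N => // n /= Nn.
rewrite /series /= (big_cat_nat _ Nn) //= big_mkord [X in _ + X]big_nat_cond.
by rewrite [X in _ + X]big1 ?addr0 // => j /andP[/andP[Nj _] _]; exact: f0.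
Qed.

(* The tail [\sum_(i >= N) u i] is lumped into the weight of index [N], so that
   a series with coefficients constant from [N] on becomes a finite sum. *)
Definition tail_weight u N j :=
  if (j < N)%N then u j else limn (series u) - \sum_(i < N) u i.

Lemma tail_weightE u N j : (j < N)%N -> tail_weight u N j = u j.
Proof. by rewrite /tail_weight => ->. Qed.

Lemma tail_weight_ge0 u N j : (forall i, 0 <= u i) -> cvgn (series u) ->
  0 <= tail_weight u N j.
Proof.
move=> u0 cu; rewrite /tail_weight; case: ifP => // _; rewrite subr_ge0.
have u_incr : nondecreasing_seq (series u).
  by apply: (@nondecreasing_series _ u predT 0) => i _ _; exact: u0.
by have := nondecreasing_cvgn_le u_incr cu N; rewrite /series /= big_mkord.
Qed.

Lemma cvg_series_eventually_const u c N : cvgn (series u) ->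
  (forall j, (N <= j)%N -> c j = c N) ->
  series (fun j => c j * u j) @ \oo --> \sum_(j < N.+1) tail_weight u N j * c j.
Proof.
move=> cu cN.
have -> : (fun j => c j * u j) = c N *: u + (fun j => (c j - c N) * u j).
  by apply/funext => j; rewrite !fctE /= -mulrDl subrKC.
rewrite seriesD seriesZ.
have -> : \sum_(j < N.+1) tail_weight u N j * c j =
    c N *: limn (series u) + \sum_(j < N) (c j - c N) * u j.
  rewrite big_ord_recr /= /tail_weight ltnn.
  under eq_bigr => j _ do rewrite ltn_ord mulrC.
  under [in RHS]eq_bigr => j _ do rewrite mulrBl.
  by rewrite sumrB -mulr_sumr /GRing.scale /=; ring.
apply: cvgD; first exact: cvgZr.
by apply: cvg_series_finsupp => j Nj; rewrite cN // subrr mul0r.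
Qed.

End eventually_constant_series.

Definition cmod (R : realType) (s t : R) : R := Num.sqrt (s ^+ 2 + t ^+ 2).

Lemma cmodr0 (R : realType) (s : R) : cmod s 0 = `|s|.
Proof. by rewrite /cmod expr0n addr0 sqrtr_sqr. Qed.

Lemma cmod_ge_norm (R : realType) (s t : R) : `|s| <= cmod s t.
Proof. by rewrite -sqrtr_sqr ler_sqrt ?addr_ge0 ?sqr_ge0 // lerDl sqr_ge0. Qed.

Lemma ler_powR2r (R : realType) (r s t : R) : 0 < r -> 0 <= s -> 0 <= t ->
  (s `^ r <= t `^ r) = (s <= t).
Proof.
move=> r0 s0 t0; apply/idP/idP; last by apply: ge0_ler_powR; rewrite ?ltW.
move=> /(@ge0_ler_powR _ r^-1); rewrite -!powRrM mulfV ?gt_eqF // !powRr1 //.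
by apply; rewrite ?invr_ge0 ?ltW // nnegrE powR_ge0.
Qed.

Section scalar_action.
Variables (R : realType) (X : normedModType R) (k : fkind X).

Lemma admissible0 : admissible k 0.
Proof. by case: k. Qed.

Lemma sc0 a b : sc k a b 0 = 0.
Proof. by case: k => [|c] /=; rewrite !raddf0 ?addr0. Qed.

Lemma norm_sc_scale a b c d (v : X) : admissible k b ->
  `|c *: v + sc k a b (d *: v)| = cmod (c + d * a) (d * b) * `|v|.
Proof.
case: k => [|cs] /= hb.
  by rewrite hb mulr0 cmodr0 scalerA -scalerDl normrZ (mulrC a).
have -> : cJ cs (d *: v) = d *: cJ cs v by rewrite linearZ.
by rewrite !scalerA addrA -scalerDl cJnorm /cmod (mulrC a) (mulrC b).
Qed.

End scalar_action.

Section three_point.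
Variable R : nmodType.

Definition three_point (n m l : nat) (u v w : R) (j : nat) : R :=
  if j == n then u else if j == m then v else if j == l then w else 0.

Lemma three_point_large n m l u v w j : (maxn n (maxn m l) < j)%N ->
  three_point n m l u v w j = 0.
Proof.
rewrite !gtn_max => /and3P[nj mj lj].
by rewrite /three_point !gtn_eqF.
Qed.

Lemma sum_ord_point (S : nmodType) (M n : nat) (c : S) : (n < M)%N ->
  \sum_(j < M) (if (j : nat) == n then c else 0) = c.
Proof.
move=> nM; rewrite (bigD1 (Ordinal nM)) //= eqxx big1 ?addr0 // => j.
by rewrite -val_eqE /= => /negbTE ->.
Qed.

Lemma sum_three_point (S : nmodType) (F : nat -> R -> S) n m l u v w M :
  n != m -> n != l -> m != l -> (n < M)%N -> (m < M)%N -> (l < M)%N ->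
  (forall j, F j 0 = 0) ->
  \sum_(j < M) F j (three_point n m l u v w j) = F n u + F m v + F l w.
Proof.
move=> nm nl ml nM mM lM F0.
have split_at j : F j (three_point n m l u v w j) =
    (if j == n then F n u else 0) + (if j == m then F m v else 0) +
    (if j == l then F l w else 0).
  rewrite /three_point; have [->|jn] := eqVneq j n.
    by rewrite (negbTE nm) (negbTE nl) !addr0.
  have [->|jm] := eqVneq j m; first by rewrite (negbTE ml) add0r addr0.
  by have [->|jl] := eqVneq j l; rewrite ?F0 !add0r ?addr0.
by under eq_bigr do rewrite split_at; rewrite !big_split /= !sum_ord_point.
Qed.

End three_point.

Definition preserves_balance (R : ringType) (A : nat -> R) (f : R -> R) : Prop :=
  forall n m l, n != m -> n != l -> m != l -> forall u v w,
  A n * u + A m * v + A l * w = 0 -> A n * f u + A m * f v + A l * f w = 0.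

Lemma mul_powR_eq (R : realType) (a b e : R) : 0 < a -> 0 < b -> e != 1 ->
  a * b `^ e = b * a `^ e -> a = b.
Proof.
move=> a0 b0 e1 /(congr1 (@ln R)); rewrite !lnM ?posrE ?powR_gt0 // !ln_powR => lnE.
have : (1 - e) * (ln a - ln b) = 0.
  by transitivity ((ln a + e * ln b) - (ln b + e * ln a)); [ring | rewrite lnE subrr].
move/eqP; rewrite mulf_eq0 subr_eq0 eq_sym (negbTE e1) subr_eq0 => /eqP.
by apply: ln_inj; rewrite posrE.
Qed.

Section balanced_signed_powers.
Variables (R : realType) (r : R) (A : nat -> R).
Hypotheses (r0 : 0 < r) (r1 : r != 1) (A_bal : preserves_balance A (spow r)).

Lemma balance_spow_eq n m : n != m -> 0 < A n -> 0 < A m -> A n = A m.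
Proof.
move=> nm An Am; have [nl ml] : n != (n + m).+1 /\ m != (n + m).+1 by split; lia.
have bal : A n * A m + A m * - A n + A (n + m).+1 * 0 = 0 by ring.
have := A_bal nm nl ml bal.
rewrite spowN spow0 !spow_gt0 // mulr0 addr0 mulrN => /eqP.
by rewrite subr_eq0 => /eqP; apply: mul_powR_eq.
Qed.

Lemma balance_spow_three n m l : n != m -> n != l -> m != l ->
  0 < A n -> 0 < A m -> 0 < A l -> False.
Proof.
move=> nm nl ml An Am Al.
have Amn := balance_spow_eq nm An Am; have Aln := balance_spow_eq nl An Al.
have bal : A n * 1 + A m * 1 + A l * - 2 = 0 by rewrite -Amn -Aln; ring.
have := A_bal nm nl ml bal.
rewrite -Amn -Aln spowN !spow1 spow_gt0 // => /eqP.
have -> : A n * 1 + A n * 1 + A n * - 2 `^ r = A n * (2 - 2 `^ r) by ring.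
rewrite mulf_eq0 (gt_eqF An) subr_eq0 /= => /eqP two_powR.
have : (2 : R) = 1 by apply: (mul_powR_eq _ _ r1); rewrite ?powR1 // -two_powR mulr1 mul1r.
by move/eqP; rewrite (eqr_nat R 2 1).
Qed.

End balanced_signed_powers.

Section lp_proportional_sequences.
Variables (R : realType) (X : normedModType R) (k : fkind X) (p : R).
Hypothesis p1 : 1 < p.
Variable x : nat -> X.
Hypothesis x_lp : lp_mem p x.

Let p0 : 0 < p. Proof. exact: lt_trans p1. Qed.
Let A j := `|x j| `^ p.
Let A_ge0 j : 0 <= A j. Proof. exact: powR_ge0. Qed.
Let w_ge0 N j : 0 <= tail_weight A N j. Proof. exact: tail_weight_ge0. Qed.

Lemma lp_norm_proportional (z : nat -> X) (f : nat -> R) N :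
  (forall j, 0 <= f j) -> (forall j, `|z j| = f j * `|x j|) ->
  (forall j, (N <= j)%N -> f j = f N) ->
  lp_mem p z /\ lp_norm p z = (\sum_(j < N.+1) tail_weight A N j * f j `^ p) `^ p^-1.
Proof.
move=> f_ge0 zE fN; rewrite /lp_mem /lp_norm.
have -> : (fun j => `|z j| `^ p) = (fun j => f j `^ p * A j).
  by apply/funext => j; rewrite zE powRM.
have zcvg := @cvg_series_eventually_const R A (fun j => f j `^ p) N x_lp
  (fun j Nj => congr1 (fun t : R => t `^ p) (fN j Nj)).
by split; [exact: cvgP zcvg | rewrite (cvg_lim _ zcvg)].
Qed.

Section eventually_constant_coefficients.
Variables (N : nat) (beta gamma : nat -> R).
Hypothesis coef_N : forall j, (N <= j)%N -> beta j = beta N /\ gamma j = gamma N.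

Let w := tail_weight A N.

Lemma lp_mem_scaled : lp_mem p (fun j => beta j *: x j).
Proof.
apply: (@lp_norm_proportional _ (fun j => `|beta j|) N _ _ _).1 => // j.
  by rewrite normrZ.
by move=> /coef_N [-> _].
Qed.

Lemma bj_lp_scaled_iff :
  bj_lp k p (fun j => beta j *: x j) (fun j => gamma j *: x j) <->
  \sum_(j < N.+1) w j * gamma j * spow (p - 1) (beta j) = 0.
Proof.
have normE a b : admissible k b ->
    lp_norm p (fun j => beta j *: x j + sc k a b (gamma j *: x j)) =
    (\sum_(j < N.+1) w j * cmod (beta j + gamma j * a) (gamma j * b) `^ p) `^ p^-1.
  move=> hb; apply: (@lp_norm_proportional _
    (fun j => cmod (beta j + gamma j * a) (gamma j * b)) N _ _ _).2
    => [j|j|j /coef_N [-> ->] //].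
    exact: sqrtr_ge0.
  exact: norm_sc_scale.
have norm0E : lp_norm p (fun j => beta j *: x j) =
    (\sum_(j < N.+1) w j * `|beta j| `^ p) `^ p^-1.
  apply: (@lp_norm_proportional _ (fun j => `|beta j|) N _ _ _).2 => // j.
    by rewrite normrZ.
  by move=> /coef_N [-> _].
have sum_ge0 (g : 'I_N.+1 -> R) : 0 <= \sum_(j < N.+1) w j * g j `^ p.
  by apply: sumr_ge0 => j _; rewrite mulr_ge0 ?w_ge0 ?powR_ge0.
have pV_gt0 : 0 < p^-1 by rewrite invr_gt0.
rewrite -(sum_powR_min_at0_iff p1 _ _ _ (w_ge0 N)).
split => [bj a | w_min a b hb].
  have := bj a 0 (admissible0 k).
  rewrite /= norm0E (normE _ _ (admissible0 k)) ler_powR2r ?sum_ge0 //.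
  suff -> : \sum_(j < N.+1) w j * cmod (beta j + gamma j * a) (gamma j * 0) `^ p =
            \sum_(j < N.+1) w j * `|beta j + gamma j * a| `^ p by [].
  by apply: eq_bigr => j _; rewrite mulr0 cmodr0.
rewrite /= norm0E (normE _ _ hb) ler_powR2r ?sum_ge0 //.
apply: le_trans (w_min a) _; apply: ler_sum => j _.
by rewrite ler_wpM2l ?w_ge0 // ler_powR2r ?normr_ge0 ?sqrtr_ge0 // cmod_ge_norm.
Qed.

End eventually_constant_coefficients.

Section three_point_scalings.
Variables (n m l : nat) (u v w : R).
Hypotheses (nm : n != m) (nl : n != l) (ml : m != l).

Let N := (maxn n (maxn m l)).+1.
Let tp := three_point n m l u v w.

Let tpN j : (N <= j)%N -> tp j = tp N.
Proof. by move=> Nj; rewrite /tp !three_point_large. Qed.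

Let sum_tp (F : nat -> R -> R) : (forall j, F j 0 = 0) ->
  \sum_(j < N.+1) F j (tp j) = F n u + F m v + F l w.
Proof.
by move=> F0; apply: sum_three_point => //; rewrite /N; lia.
Qed.

Let wE : [/\ tail_weight A N n = A n, tail_weight A N m = A m &
            tail_weight A N l = A l].
Proof. by split; apply: tail_weightE; rewrite /N; lia. Qed.

Let x1 : x = fun j => (fun=> 1 : R) j *: x j.
Proof. by apply/funext => j; rewrite scale1r. Qed.

Lemma bj_lp_three_point_r :
  bj_lp k p x (fun j => tp j *: x j) <-> A n * u + A m * v + A l * w = 0.
Proof.
rewrite {1}x1 (bj_lp_scaled_iff (N := N)) => [|j /tpN ->//].
rewrite (@sum_tp (fun j t => tail_weight A N j * t * spow (p - 1) 1)) => [|j]; last first.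
  by rewrite mulr0 mul0r.
by case: wE => -> -> ->; rewrite spow1 !mulr1.
Qed.

Lemma bj_lp_three_point_l :
  bj_lp k p (fun j => tp j *: x j) x <->
  A n * spow (p - 1) u + A m * spow (p - 1) v + A l * spow (p - 1) w = 0.
Proof.
rewrite {2}x1 (bj_lp_scaled_iff (N := N)) => [|j /tpN ->//].
rewrite (@sum_tp (fun j t => tail_weight A N j * 1 * spow (p - 1) t)) => [|j]; last first.
  by rewrite spow0 mulr0.
by case: wE => -> -> ->; rewrite !mulr1.
Qed.

Lemma lp_mem_three_point : lp_mem p (fun j => tp j *: x j).
Proof. by apply: (lp_mem_scaled (N := N) (gamma := 0)) => j /tpN ->. Qed.

End three_point_scalings.

Lemma left_sym_lp_balance : left_sym_lp k p x -> preserves_balance A (spow (p - 1)).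
Proof.
move=> HL n m l nm nl ml u v w bal.
apply/(bj_lp_three_point_l u v w nm nl ml); apply: HL; first exact: lp_mem_three_point.
exact/(bj_lp_three_point_r u v w nm nl ml).
Qed.

Lemma right_sym_lp_balance :
  right_sym_lp k p x -> preserves_balance A (spow (p - 1)^-1).
Proof.
move=> HR n m l nm nl ml u v w bal.
have spowKV t : spow (p - 1) (spow (p - 1)^-1 t) = t.
  by rewrite -{1}[p - 1]invrK spowK // invr_gt0 subr_gt0.
apply/(bj_lp_three_point_r _ _ _ nm nl ml); apply: HR; first exact: lp_mem_three_point.
by apply/(bj_lp_three_point_l _ _ _ nm nl ml); rewrite !spowKV.
Qed.

End lp_proportional_sequences.

Section single_support.
Variables (R : realType) (X : normedModType R) (k : fkind X) (p : R).
Hypothesis p0 : 0 < p.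

Lemma lp_norm_single (u : nat -> X) n : (forall j, j != n -> u j = 0) ->
  lp_mem p u /\ lp_norm p u = `|u n|.
Proof.
move=> un.
have ucvg : series (fun j => `|u j| `^ p) @ \oo --> `|u n| `^ p.
  have zero_p : `|0 : X| `^ p = 0 by rewrite normr0 powR0 // gt_eqF.
  have := @cvg_series_finsupp R (fun j => `|u j| `^ p) n.+1.
  rewrite big_ord_recr /= big1 => [|j _]; last by rewrite un ?zero_p // ltn_eqF.
  by rewrite add0r; apply => j nj; rewrite un ?zero_p // gtn_eqF.
split; first exact: cvgP ucvg.
by rewrite /lp_norm (cvg_lim _ ucvg) // -powRrM mulfV ?gt_eqF // powRr1.
Qed.

Lemma bj_lp_single (u v : nat -> X) n : (forall j, j != n -> u j = 0 /\ v j = 0) ->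
  bj_lp k p u v <-> bj k (u n) (v n).
Proof.
move=> uv.
have uE : lp_norm p u = `|u n| by apply: (lp_norm_single _).2 => j /uv[].
have sumE a b : lp_norm p (fun j => u j + sc k a b (v j)) = `|u n + sc k a b (v n)|.
  by apply: (lp_norm_single _).2 => j /uv[-> ->]; rewrite sc0 addr0.
by split => uv_bj a b hb; move: (uv_bj a b hb); rewrite uE sumE.
Qed.

Let single (n : nat) (y : X) (j : nat) : X := if j == n then y else 0.

Let single_supp n y j : j != n -> single n y j = 0.
Proof. by rewrite /single => /negbTE ->. Qed.

Lemma left_sym_lp_single (x : nat -> X) n :
  left_sym_lp k p x -> (forall j, j != n -> x j = 0) -> left_sym k (x n).
Proof.
move=> HL xn y bj_xy.
have supp j : j != n -> x j = 0 /\ single n y j = 0 by move=> jn; rewrite xn ?single_supp.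
have suppC j : j != n -> single n y j = 0 /\ x j = 0 by move=> /supp[].
have Yn : single n y n = y by rewrite /single eqxx.
rewrite -Yn; apply/(bj_lp_single suppC); apply: HL.
  exact: (lp_norm_single (single_supp y)).1.
by apply/(bj_lp_single supp); rewrite Yn.
Qed.

Lemma right_sym_lp_single (x : nat -> X) n :
  right_sym_lp k p x -> (forall j, j != n -> x j = 0) -> right_sym k (x n).
Proof.
move=> HR xn y bj_yx.
have supp j : j != n -> x j = 0 /\ single n y j = 0 by move=> jn; rewrite xn ?single_supp.
have suppC j : j != n -> single n y j = 0 /\ x j = 0 by move=> /supp[].
have Yn : single n y n = y by rewrite /single eqxx.
rewrite -Yn; apply/(bj_lp_single supp); apply: HR.
  exact: (lp_norm_single (single_supp y)).1.
by apply/(bj_lp_single suppC); rewrite Yn.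
Qed.

End single_support.

Section support.
Variables (R : realType) (X : normedModType R) (x : nat -> X) (P : X -> Prop).

Lemma support_dichotomy :
  (forall n m, n != m -> x n != 0 -> x m != 0 -> `|x n| = `|x m|) ->
  (forall n m l, n != m -> n != l -> m != l ->
     x n != 0 -> x m != 0 -> x l != 0 -> False) ->
  (forall n, (forall j, j != n -> x j = 0) -> P (x n)) ->
  (exists n : nat, (forall j, j != n -> x j = 0) /\ P (x n)) \/
  (exists n m : nat, n != m /\ (forall j, j != n -> j != m -> x j = 0) /\
                     `|x n| = `|x m|).
Proof.
move=> norm_eq no_three single.
have [[n [m [nm [xn xm]]]]|no_two] :=
  pselect (exists n m : nat, n != m /\ x n != 0 /\ x m != 0).
  right; exists n, m; split=> //; split; last exact: norm_eq.
  move=> j jn jm; have [//|xj] := eqVneq (x j) 0; exfalso.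
  by apply: (no_three n m j) => //; rewrite eq_sym.
left; have [[n xn]|all0] := pselect (exists n : nat, x n != 0).
  suff supp_n : forall j, j != n -> x j = 0 by exists n; split; last exact: single.
  move=> j jn; have [//|xj] := eqVneq (x j) 0.
  by case: no_two; exists j, n.
have supp0 j : j != 0%N -> x j = 0.
  by move=> _; have [//|xj] := eqVneq (x j) 0; case: all0; exists j.
by exists 0%N; split; last exact: single.
Qed.

Lemma support_of_balance (p r : R) : 0 < p -> 0 < r -> r != 1 ->
  preserves_balance (fun j => `|x j| `^ p) (spow r) ->
  (forall n, (forall j, j != n -> x j = 0) -> P (x n)) ->
  (exists n : nat, (forall j, j != n -> x j = 0) /\ P (x n)) \/
  (exists n m : nat, n != m /\ (forall j, j != n -> j != m -> x j = 0) /\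
                     `|x n| = `|x m|).
Proof.
move=> p0 r0 r1 bal; apply: support_dichotomy.
  have xp_gt0 j : x j != 0 -> 0 < `|x j| `^ p by move=> xj; rewrite powR_gt0 // normr_gt0.
  move=> n m nm /xp_gt0 xn /xp_gt0 xm.
  have := @balance_spow_eq R r (fun j => `|x j| `^ p) r0 r1 bal n m nm xn xm.
  by move=> pE; apply: (powR_injective p0 _ _ pE); rewrite nnegrE.
move=> n m l nm nl ml xn xm xl.
by apply: (balance_spow_three r0 r1 bal nm nl ml); rewrite powR_gt0 // normr_gt0.
Qed.

End support.

Theorem corollary3p17 (R : realType) (X : completeNormedModType R) (k : fkind X)
    (p : R) :
  norm_frechet X -> 1 < p -> p != 2 ->
  forall x : nat -> X, lp_mem p x ->
  (left_sym_lp k p x ->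
     (exists n : nat, (forall j, j != n -> x j = 0) /\ left_sym k (x n)) \/
     (exists n m : nat, n != m /\ (forall j, j != n -> j != m -> x j = 0) /\
                        `|x n| = `|x m|)) /\
  (right_sym_lp k p x ->
     (exists n : nat, (forall j, j != n -> x j = 0) /\ right_sym k (x n)) \/
     (exists n m : nat, n != m /\ (forall j, j != n -> j != m -> x j = 0) /\
                        `|x n| = `|x m|)).
Proof.
move=> _ p1 p2 x x_lp; have p0 : 0 < p := lt_trans ltr01 p1.
have r_gt0 : 0 < p - 1 by rewrite subr_gt0.
have r_neq1 : p - 1 != 1 by apply: contra p2 => /eqP r1; apply/eqP; lra.
split=> [HL | HR].
  apply: (support_of_balance p0 r_gt0 r_neq1 (left_sym_lp_balance p1 x_lp HL)).
  by move=> n; exact: (left_sym_lp_single p0 HL).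
apply: (support_of_balance (r := (p - 1)^-1) p0); rewrite ?invr_gt0 ?invr_eq1 //.
  exact: (right_sym_lp_balance p1 x_lp HR).
by move=> n; exact: (right_sym_lp_single p0 HR).
Qed.
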